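(* Let $p_s\in(0,1)$, $p_f=1-p_s$, let $K\ge1$ be an integer and let $p_0,p\in[0,1]$ with $p_0+Kp=1$. Let $(h(t))_{t\in\mathbb{N}}$ be i.i.d. with $\mathbb{P}[h(t)=1]=p_s$, $\mathbb{P}[h(t)=0]=p_f$, and let $(\delta(t))_{t\in\mathbb{N}}$ be i.i.d., independent of $(h(t))$, with $\mathbb{P}[\delta(t)=0]=p_0$ and $\mathbb{P}[\delta(t)=k]=p$ for $1\le k\le K$. Define the positive-integer-valued process $\Delta(t)$ by $$\Delta(t)=\begin{cases}\delta(t)+1, & h(t)=1,\\ \max\{1,\ \Delta(t-1)+\delta(t)-\delta(t-1)+1\}, & h(t)=0.\end{cases}$$ Then the stationary distribution $\pi_{k,i}=\lim_{t\to\infty}\mathbb{P}[\delta(t)=k,\Delta(t)=i]$, $k\in\{0,1,\dots,K\}$, $i\ge1$, of the Markov chain $(\delta(t),\Delta(t))$ is given by $$\pi_{k,i}=\begin{cases} p_0\,p_s\,p_f^{\,i-1}, & k=0,\ i\ge1,\\ p\,p_s\,p_f^{\,i-k-1}, & 1\le k\le \min\{K,i-1\},\\ 0, & \text{otherwise}.\end{cases}$$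
   Context: Model: $h(t)=1$ means successful decoding at the receiver in slot $t$; $\delta(t)$ is the (random) clock drift, in slots, of the receiver's clock relative to the transmitter's clock in slot $t$; $\Delta(t)$ is the age of information (AoI) at the receiver in slot $t$. *)

From HB Require Import structures.
From mathcomp Require Import all_boot all_order all_algebra.
From mathcomp Require Import all_classical all_reals topology normedtype sequences.
Set Implicit Arguments. Unset Strict Implicit. Unset Printing Implicit Defensive.
Import Order.TTheory GRing.Theory Num.Theory.
Local Open Scope ring_scope.

(* AoI recursion, given a realisation of (h(t)) and (delta(t)) and the
   initial value Delta(0) = d0:
   Delta(t+1) = delta(t+1) + 1                                   if h(t+1) = 1
              = max(1, Delta(t) + delta(t+1) - delta(t) + 1)      if h(t+1) = 0.
   Truncated nat subtraction is harmless here: (a + b + 1) - c truncates to 0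
   exactly when the integer value is <= 0, and then the max with 1 gives 1. *)
Fixpoint aoi (h : nat -> bool) (d : nat -> nat) (d0 : nat) (t : nat) : nat :=
  match t with
  | 0 => d0
  | t'.+1 => if h t'.+1 then (d t'.+1).+1
             else maxn 1 (aoi h d d0 t' + d t'.+1 + 1 - d t')
  end.

(* Probability that (delta(t), Delta(t)) = (k, i), where h(0..t) are i.i.d.  Computed as the (finite) sum over all realisations of
   (h(0..t), delta(0..t)) of their product probability. *)
Definition joint_prob (R : realType) (ps p0 p : R) (K d0 t k i : nat) : R :=
  \sum_(hh : {ffun 'I_t.+1 -> bool})
   \sum_(dd : {ffun 'I_t.+1 -> 'I_K.+1})
     ((\prod_(j < t.+1) (if hh j then ps else 1 - ps)) *
      (\prod_(j < t.+1) (if val (dd j) == 0%N then p0 else p)) *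
      (if (val (dd ord_max) == k) &&
          (aoi (fun n => hh (inord n)) (fun n => val (dd (inord n))) d0 t == i)
       then 1 else 0)).

Definition pi_stat (R : realType) (ps p0 p : R) (K k i : nat) : R :=
  if (k == 0%N) && (1 <= i)%N then p0 * ps * (1 - ps) ^+ (i - 1)
  else if (1 <= k)%N && (k <= minn K (i - 1))%N then p * ps * (1 - ps) ^+ (i - k - 1)
  else 0.

From HB Require Import structures.
From mathcomp Require Import all_boot all_order all_algebra.
From mathcomp Require Import all_classical all_reals topology normedtype sequences.
From mathcomp Require Import zify lra.
Import Order.TTheory GRing.Theory Num.Theory numFieldNormedType.Exports.
Set Implicit Arguments. Unset Strict Implicit. Unset Printing Implicit Defensive.

(* Once a success has occurred in slots 1..t the AoI forgets its past: if L is
   the last success, Delta(t) = delta(t) + (t - L) + 1.  Hence, for t >= i and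
   outside the event "no success in slots 1..t", the event
   {delta(t) = k, Delta(t) = i} coincides with the event "k < i, delta(t) = k,
   success at slot t - (i - k - 1) and failures after it", whose probability
   is exactly pi_{k,i} by independence.  The exceptional event has probability
   (1 - p_s)^t, so the joint probability converges geometrically to pi_{k,i}. *)

Lemma aoi_since_success (h : nat -> bool) (d : nat -> nat) d0 s t :
  (0 < s <= t)%N -> h s -> (forall j, (s < j <= t)%N -> ~~ h j) ->
  aoi h d d0 t = (d t + (t - s)).+1.
Proof.
elim: t => [|t IH] /= st hs hn; first lia.
have [es|s_ne] := eqVneq s t.+1; first by rewrite -es hs es subnn addn0.
rewrite (negbTE (hn t.+1 _)) ?IH //; [lia | lia | by move=> j ?; apply: hn; lia | lia].
Qed.

Section LastSuccess.
Variables (t : nat) (hh : {ffun 'I_t.+1 -> bool}).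

Definition success_pattern (s j : nat) (b : bool) :=
  if j == s then b else if (s < j)%N then ~~ b else true.

Definition last_success_at (s : nat) :=
  [forall j : 'I_t.+1, success_pattern s j (hh j)].

Definition no_success := [forall j : 'I_t.+1, (0 < j)%N ==> ~~ hh j].

Lemma exists_last_success : ~~ no_success ->
  exists L : 'I_t.+1, [/\ (0 < L)%N, hh L & forall j : 'I_t.+1, L < j -> ~~ hh j].
Proof.
move=> /forallPn [j0]; rewrite negb_imply negbK => /andP [j0_gt0 hj0].
case: (arg_maxnP val hj0) => L hL Lmax; exists L; split => // [|j Lj].
  exact: leq_trans j0_gt0 (Lmax _ hj0).
by apply/negP => /Lmax /=; rewrite leqNgt Lj.
Qed.

Lemma last_success_atE (L : 'I_t.+1) s :
  hh L -> (forall j : 'I_t.+1, L < j -> ~~ hh j) -> (s <= t)%N ->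
  last_success_at s = (s == L).
Proof.
move=> hL Lmax st; apply/forallP/eqP => [pat | -> j]; last first.
  rewrite /success_pattern; case: eqVneq => [/val_inj -> //|_].
  by case: ifP => // /Lmax.
have := pat (inord s); rewrite /success_pattern inordK // eqxx => hs.
have [sL|Ls|//] := ltngtP s L.
  by have := pat L; rewrite /success_pattern gtn_eqF // sL hL.
by have := Lmax (inord s); rewrite /= inordK // Ls hs => /(_ isT).
Qed.

End LastSuccess.

Lemma aoi_event_after_success t K d0 k i
    (hh : {ffun 'I_t.+1 -> bool}) (dd : {ffun 'I_t.+1 -> 'I_K.+1}) :
  (i <= t)%N -> ~~ no_success hh ->
  (val (dd ord_max) == k) &&
    (aoi (fun n => hh (inord n)) (fun n => val (dd (inord n))) d0 t == i)
  = [&& (k < i)%N, last_success_at hh (t - (i - k - 1)) & val (dd ord_max) == k].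
Proof.
move=> it /exists_last_success [L [L_gt0 hL Lmax]].
have Lt : (L <= t)%N by rewrite -ltnS.
rewrite (aoi_since_success _ _ (s := L)) ?inord_val ?L_gt0 //; last first.
  by move=> j /andP [Lj jt]; apply: Lmax; rewrite /= inordK.
rewrite (last_success_atE hL Lmax) ?leq_subr //.
have -> : inord t = ord_max :> 'I_t.+1 by apply: val_inj; rewrite /= inordK.
case: eqP => [->|_]; last by rewrite !andbF.
rewrite andbT.
by apply/eqP/andP => [<-|[ki /eqP <-]]; [split; [|apply/eqP]|]; lia.
Qed.

Local Open Scope classical_set_scope.
Local Open Scope ring_scope.

Lemma prod_ord_pivot (R : pzSemiRingType) (a b : R) s n : (s <= n)%N ->
  \prod_(j < n.+1) (if val j == s then a else if (s < j)%N then b else 1)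
  = a * b ^+ (n - s).
Proof.
elim: n => [|n IH] sn.
  by move: sn; rewrite leqn0 => /eqP->; rewrite big_ord1 mulr1.
rewrite big_ord_recr /=; have [->|ns] := eqVneq s n.+1.
  rewrite subnn mulr1 big1 ?mul1r // => j _.
  by rewrite (ltn_eqF (ltn_ord j)) ltnNge ltnW.
have sn' : (s <= n)%N by rewrite -ltnS ltn_neqAle ns.
by rewrite IH // ltnS sn' (subSn sn') exprSr mulrA.
Qed.

Lemma sum_ffun_forall (R : pzSemiRingType) (I J : finType)
    (w : I -> J -> R) (P : I -> pred J) :
  \sum_(f : {ffun I -> J} | [forall i, P i (f i)]) \prod_i w i (f i)
  = \prod_i \sum_(j | P i j) w i j.
Proof. by rewrite bigA_distr_big_dep. Qed.

Section PathProbability.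
Variables (R : realType) (ps p0 p : R) (K : nat).

Definition success_weight (b : bool) : R := if b then ps else 1 - ps.

Definition drift_weight (x : 'I_K.+1) : R := if val x == 0%N then p0 else p.

Definition path_weight t
    (hh : {ffun 'I_t.+1 -> bool}) (dd : {ffun 'I_t.+1 -> 'I_K.+1}) : R :=
  (\prod_j success_weight (hh j)) * (\prod_j drift_weight (dd j)).

Local Notation path_event t :=
  ({ffun 'I_t.+1 -> bool} -> {ffun 'I_t.+1 -> 'I_K.+1} -> bool).

Definition path_prob t (E : path_event t) : R :=
  \sum_hh \sum_dd path_weight hh dd * (if E hh dd then 1 else 0).

Lemma path_prob_product t (E : path_event t) c
    (Ph : 'I_t.+1 -> pred bool) (Pd : 'I_t.+1 -> pred 'I_K.+1) :
  (forall hh dd,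
     E hh dd = [&& c, [forall j, Ph j (hh j)] & [forall j, Pd j (dd j)]]) ->
  path_prob E =
  (if c then 1 else 0) * (\prod_j \sum_(b | Ph j b) success_weight b)
                       * (\prod_j \sum_(x | Pd j x) drift_weight x).
Proof.
move=> EE.
have -> : E = fun hh dd =>
    [&& c, [forall j, Ph j (hh j)] & [forall j, Pd j (dd j)]].
  by apply/funext => hh; apply/funext => dd; exact: EE.
rewrite /path_prob {EE}; case: c; last first.
  by rewrite !mul0r big1 // => hh _; rewrite big1 // => dd _; rewrite mulr0.
rewrite mul1r -!sum_ffun_forall big_distrlr [RHS]big_mkcond; apply: eq_bigr => hh _ /=.
case: ifP => _; last by rewrite big1 // => dd _; rewrite mulr0.
rewrite [RHS]big_mkcond; apply: eq_bigr => dd _ /=.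
by case: ifP; rewrite ?mulr1 ?mulr0.
Qed.

Lemma sum_success_weight : \sum_b success_weight b = 1.
Proof. by rewrite big_bool /= addrC subrK. Qed.

Hypothesis drift_total : p0 + K%:R * p = 1.

Lemma sum_drift_weight : \sum_x drift_weight x = 1.
Proof.
rewrite big_ord_recl /drift_weight /=.
by under eq_bigr => x _ do rewrite /bump /=; rewrite sumr_const card_ord -mulr_natl.
Qed.

Lemma path_prob_no_success t :
  path_prob (fun hh (_ : {ffun 'I_t.+1 -> 'I_K.+1}) => no_success hh) = (1 - ps) ^+ t.
Proof.
rewrite (@path_prob_product _ _ true (fun (j : 'I_t.+1) b => (0 < j)%N ==> ~~ b)
  (fun _ _ => true)).
  rewrite mul1r [X in _ * X]big1 ?mulr1 => [|j _]; last exact: sum_drift_weight.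
  rewrite big_ord_recl sum_success_weight mul1r -[t in RHS]card_ord -prodr_const.
  by apply: eq_bigr => j _; rewrite (big_pred1 false) // => -[].
move=> hh dd; have -> : [forall j : 'I_t.+1, true] by apply/forallP.
by rewrite andbT.
Qed.

Lemma prod_success_pattern t s : (s <= t)%N ->
  \prod_(j < t.+1) \sum_(b | success_pattern s j b) success_weight b
  = ps * (1 - ps) ^+ (t - s).
Proof.
move=> st; rewrite -prod_ord_pivot //; apply: eq_bigr => j _.
rewrite /success_pattern; case: eqP => _; first by rewrite (big_pred1 true) // => -[].
by case: ifP => _; [rewrite (big_pred1 false) // => -[] | rewrite sum_success_weight].
Qed.

Lemma prod_drift_weight_last t k : (k <= K)%N ->
  \prod_(j < t.+1) \sum_(x | (j == ord_max) ==> (val x == k)) drift_weight x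
  = drift_weight (inord k).
Proof.
move=> kK; rewrite (bigD1 ord_max) //= [X in _ * X]big1 ?mulr1; last first.
  by move=> j /negbTE -> /=; exact: sum_drift_weight.
by apply: big_pred1 => x /=; rewrite eqxx -(inj_eq val_inj) /= inordK.
Qed.

Lemma path_prob_last_success t k i : (k <= K)%N -> (0 < i)%N -> (i <= t)%N ->
  path_prob (fun (hh : {ffun 'I_t.+1 -> bool}) dd =>
    [&& (k < i)%N, last_success_at hh (t - (i - k - 1)) & val (dd ord_max) == k])
  = pi_stat ps p0 p K k i.
Proof.
move=> kK i_gt0 it; set s := (t - (i - k - 1))%N.
rewrite (@path_prob_product _ _ (k < i)%N (fun j => success_pattern s j)
  (fun j x => (j == ord_max) ==> (val x == k))); last first.
  move=> hh dd; congr [&& _, _ & _].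
  apply/idP/forallP => [dk j|/(_ ord_max)]; rewrite ?eqxx //.
  by apply/implyP => /eqP ->.
rewrite prod_success_pattern ?leq_subr // prod_drift_weight_last //.
rewrite /pi_stat /drift_weight /= inordK ?ltnS //.
have [ki|ik] := ltnP k i; last by rewrite !mul0r !ifF //; apply/negbTE; lia.
have -> : (t - s = i - k - 1)%N by rewrite /s; lia.
have [->|k_gt0] := eqVneq k 0%N; first by rewrite i_gt0 subn0 mul1r mulrC mulrA.
by rewrite ifT /=; [rewrite mul1r mulrC mulrA | lia].
Qed.

Hypotheses (ps_ge0 : 0 <= ps) (ps_le1 : ps <= 1).
Hypotheses (p0_ge0 : 0 <= p0) (p_ge0 : 0 <= p).

Lemma path_weight_ge0 t (hh : {ffun 'I_t.+1 -> bool}) (dd : {ffun 'I_t.+1 -> 'I_K.+1}) :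
  0 <= path_weight hh dd.
Proof.
apply: mulr_ge0; apply: prodr_ge0 => j _.
  by rewrite /success_weight; case: ifP; rewrite ?subr_ge0.
by rewrite /drift_weight; case: ifP.
Qed.

Lemma path_prob_dist_le t (A B N : path_event t) :
  (forall hh dd, ~~ N hh dd -> A hh dd = B hh dd) ->
  `|path_prob A - path_prob B| <= path_prob N.
Proof.
move=> AB; rewrite /path_prob -sumrB.
apply: le_trans (ler_norm_sum _ _ _) _; apply: ler_sum => hh _.
rewrite -sumrB; apply: le_trans (ler_norm_sum _ _ _) _; apply: ler_sum => dd _.
rewrite -mulrBr normrM ger0_norm ?path_weight_ge0 //.
apply: ler_wpM2l; first exact: path_weight_ge0.
have [_|/AB ->] := boolP (N hh dd); last by rewrite subrr normr0.
by case: (A hh dd); case: (B hh dd); rewrite ?subrr ?normr0 ?subr0 ?sub0r ?normrN ?normr1.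
Qed.

End PathProbability.

Lemma joint_probE (R : realType) (ps p0 p : R) K d0 t k i :
  joint_prob ps p0 p K d0 t k i =
  path_prob ps p0 p (fun hh (dd : {ffun 'I_t.+1 -> 'I_K.+1}) =>
    (val (dd ord_max) == k) &&
    (aoi (fun n => hh (inord n)) (fun n => val (dd (inord n))) d0 t == i)).
Proof. by []. Qed.

Lemma cvg_geometric_dist_le (R : realType) (u : nat -> R) (l q : R) (N : nat) :
  0 <= q < 1 -> (forall t, (N <= t)%N -> `|l - u t| <= q ^+ t) -> u @ \oo --> l.
Proof.
move=> /andP [q_ge0 q_lt1] u_close; apply/cvgrPdist_le => e e_gt0.
have q_norm : `|q| < 1 by rewrite ger0_norm.
have /cvgrPdist_le /(_ e e_gt0) := cvg_expr q_norm.
apply: filterS2 (nbhs_infty_ge N) => t Nt qt.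
apply: le_trans (u_close t Nt) _.
by rewrite sub0r normrN ger0_norm ?exprn_ge0 in qt.
Qed.

Theorem lemma2 (R : realType) (ps p0 p : R) (K d0 : nat)
  (hps : 0 < ps < 1) (hK : (1 <= K)%N)
  (hp0 : 0 <= p0 <= 1) (hp : 0 <= p <= 1) (hsum : p0 + K%:R * p = 1)
  (hd0 : (1 <= d0)%N) :
  forall k i : nat, (k <= K)%N -> (1 <= i)%N ->
    (fun t : nat => joint_prob ps p0 p K d0 t k i) @ \oo --> pi_stat ps p0 p K k i.
Proof.
move=> k i kK i_gt0.
case/andP: hps => ps_gt0 ps_lt1; case/andP: hp0 => p0_ge0 _; case/andP: hp => p_ge0 _.
apply: (@cvg_geometric_dist_le _ _ _ (1 - ps) i) => [|t it]; first lra.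
rewrite joint_probE -(path_prob_last_success ps hsum kK i_gt0 it).
rewrite -(path_prob_no_success ps hsum t) distrC.
apply: (path_prob_dist_le (ltW ps_gt0) (ltW ps_lt1) p0_ge0 p_ge0) => hh dd.
exact: aoi_event_after_success.
Qed.
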